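(* Consider a chain of $N$ sites, each with a finite-dimensional local Hilbert space, and let $$H=\sum_{j=1}^{N-1}L_{j,j+1}^\dagger L_{j,j+1},$$ where each operator $L_{j,j+1}$ acts non-trivially only on sites $j$ and $j+1$. Suppose the ground-state manifold of $H$ is $G=\bigcap_{j}\ker(L_{j,j+1})\neq\{0\}$, spanned by linearly independent states $|\Psi_1\rangle,\ldots,|\Psi_n\rangle$. For each site $j$ let $M_j$ be an invertible operator acting non-trivially only on site $j$, let $M=\prod_j M_j$, and set $\tilde L_{j,j+1}=ML_{j,j+1}M^{-1}=M_jM_{j+1}L_{j,j+1}M_{j+1}^{-1}M_j^{-1}$. For each $j$ let $C_{j,j+1}=K_{j,j+1}^\dagger K_{j,j+1}$ be a positive definite operator (i.e. $\langle\Psi|C_{j,j+1}|\Psi\rangle>0$ for all $|\Psi\rangle\neq 0$) acting non-trivially only on sites $j,j+1$, and define $$\tilde H=\sum_{j=1}^{N-1}\tilde L_{j,j+1}^\dagger C_{j,j+1}\tilde L_{j,j+1}.$$ Then the ground-state manifold $\tilde G$ of $\tilde H$ is $\tilde G=\mathrm{Span}\{M|\Psi_1\rangle,\ldots,M|\Psi_n\rangle\}$ (it equals $\ker\tilde H=\bigcap_j\ker\tilde L_{j,j+1}$); in particular $H$ and $\tilde H$ have the same ground-state degeneracy.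
   Context: Operators acting non-trivially on certain sites are understood as tensored with identities on all other sites. $A^\dagger$ denotes the adjoint. The ground-state manifold of a positive semi-definite Hamiltonian with non-trivial kernel is its kernel (the eigenspace of eigenvalue $0$). *)

From mathcomp Require Import all_boot all_algebra.
From mathcomp Require Export complex.
From mathcomp Require Export reals.
Set Implicit Arguments. Unset Strict Implicit. Unset Printing Implicit Defensive.
Import GRing.Theory Num.Theory.
Local Open Scope ring_scope.

(* A chain of N sites; site j : 'I_N has local Hilbert space C^(d j).
   Basis configurations of the full chain: *)
Definition config (N : nat) (d : 'I_N -> nat) : finType :=
  {dffun forall j : 'I_N, 'I_(d j)}.

Notation hdim d := #|config d|.

(* Operators on the total Hilbert space are 'M[R[i]]_(hdim d) matrices whose
   (row, column) indices are basis configurations (via enum_rank);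
   states are column vectors 'cV[R[i]]_(hdim d). *)

Definition adj (R : realType) (m n : nat) (A : 'M[R[i]]_(m, n)) : 'M[R[i]]_(n, m) :=
  (map_mx (fun z : R[i] => z^*) A)^T.

Definition agree_off (N : nat) (d : 'I_N -> nat) (S : {set 'I_N}) (x y : config d) : bool :=
  [forall j, (j \notin S) ==> (x j == y j)].

(* A acts non-trivially only on the sites in S, i.e. A = a (x) Id_{complement of S}
   for some operator a on the sites of S: its matrix element <x|A|y> vanishes unless
   x and y agree off S, and otherwise depends only on the restrictions of x and y to S. *)
Definition acts_on (R : realType) (N : nat) (d : 'I_N -> nat) (S : {set 'I_N})
    (A : 'M[R[i]]_(hdim d)) : Prop :=
  exists f : config d -> config d -> R[i],
    (forall x x' y y' : config d,
        (forall j, j \in S -> x j = x' j) -> (forall j, j \in S -> y j = y' j) ->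
        f x y = f x' y') /\
    (forall x y : config d,
        A (enum_rank x) (enum_rank y) = if agree_off S x y then f x y else 0).

Definition bond (N : nat) (j : 'I_N) : {set 'I_N} :=
  [set k : 'I_N | (k == j :> nat) || (k == j.+1 :> nat)].

Definition pos_def (R : realType) (n : nat) (A : 'M[R[i]]_n) : Prop :=
  forall v : 'cV[R[i]]_n, v != 0 -> 0 < (adj v *m A *m v) 0 0.

Definition in_span (R : realType) (D n : nat) (Psi : 'I_n -> 'cV[R[i]]_D)
    (v : 'cV[R[i]]_D) : Prop :=
  exists c : 'I_n -> R[i], v = \sum_(i < n) c i *: Psi i.

Definition lin_indep (R : realType) (D n : nat) (Psi : 'I_n -> 'cV[R[i]]_D) : Prop :=
  forall c : 'I_n -> R[i], \sum_(i < n) c i *: Psi i = 0 -> forall i, c i = 0.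

(* Ground-state manifold (= kernel, for the PSD Hamiltonians considered here). *)
Definition gs_manifold (R : realType) (D : nat) (H : 'M[R[i]]_D) (v : 'cV[R[i]]_D) : Prop :=
  H *m v = 0.

(* Each term adj(Lt j) C_j Lt j of Ht is positive semidefinite, and its quadratic
   form vanishes exactly when Lt j v = 0 because C_j is positive definite; hence
   ker Ht is the common kernel of the Lt j.  Since Lt j = M L_j M^-1 with M
   invertible, Lt j v = 0 iff L_j (M^-1 v) = 0, so this common kernel is M G,
   spanned by the independent states M Psi_k. *)
From mathcomp Require Import all_boot all_order all_algebra.
From mathcomp Require Import complex reals.
Import Order.TTheory GRing.Theory Num.Theory.
Local Open Scope ring_scope.

Section PositiveForms.
Context {R : realType}.

Lemma adj_mulmx (m n p : nat) (A : 'M[R[i]]_(m, n)) (B : 'M[R[i]]_(n, p)) :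
  adj (A *m B) = adj B *m adj A.
Proof.
by rewrite /adj (map_mxM (Num.Def.conjC : {rmorphism R[i] -> R[i]})) trmx_mul.
Qed.

Context {D : nat}.
Implicit Types (A C M : 'M[R[i]]_D) (v w : 'cV[R[i]]_D).

Lemma pos_def_quad_ge0 C w : pos_def C -> 0 <= (adj w *m C *m w) 0 0.
Proof.
move=> posC; have [->|w_neq0] := eqVneq w 0; first by rewrite mulmx0 mxE.
exact/ltW/posC.
Qed.

Lemma pos_def_quad_eq0 C w : pos_def C -> (adj w *m C *m w) 0 0 = 0 -> w = 0.
Proof.
move=> posC qw0; apply/eqP/negPn/negP => /posC.
by rewrite qw0 ltxx.
Qed.

Lemma sum_adj_pos_def_ker (I : finType) (P : pred I) (A C : I -> 'M[R[i]]_D) v :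
  (forall j, P j -> pos_def (C j)) ->
  (\sum_(j | P j) adj (A j) *m C j *m A j) *m v = 0 <->
  (forall j, P j -> A j *m v = 0).
Proof.
move=> posC; split=> [Hv j Pj | HA]; last first.
  by rewrite mulmx_suml big1 // => j Pj; rewrite -mulmxA HA // mulmx0.
have quad_sum : \sum_(k | P k) (adj (A k *m v) *m C k *m (A k *m v)) 0 0 = 0.
  rewrite -summxE.
  have quad_term k : adj (A k *m v) *m C k *m (A k *m v)
                     = adj v *m (adj (A k) *m C k *m A k) *m v.
    by rewrite adj_mulmx !mulmxA.
  under eq_bigr do rewrite quad_term.
  by rewrite -mulmx_suml -mulmx_sumr -mulmxA Hv mulmx0 mxE.
apply: (pos_def_quad_eq0 _ _ (posC j Pj)).
by apply: (psumr_eq0P _ quad_sum) => // k Pk; apply: pos_def_quad_ge0; apply: posC.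
Qed.

Lemma unitmx_big_mulmx (I : Type) (r : seq I) (P : pred I) (F : I -> 'M[R[i]]_D) :
  (forall j, P j -> F j \in unitmx) -> \big[mulmx/1%:M]_(j <- r | P j) F j \in unitmx.
Proof.
move=> uF; apply: (big_ind (fun A => A \in unitmx)) => //; first exact: unitmx1.
by move=> A B uA uB; rewrite unitmx_mul uA uB.
Qed.

Lemma conjmx_mulmx_eq0 M A v :
  M \in unitmx -> M *m A *m invmx M *m v = 0 <-> A *m (invmx M *m v) = 0.
Proof.
move=> uM; rewrite -!mulmxA; split=> [|->]; last by rewrite mulmx0.
by move/(congr1 (mulmx (invmx M))); rewrite mulKmx // mulmx0.
Qed.

Lemma in_span_mulmx n M (Psi : 'I_n -> 'cV[R[i]]_D) v :
  M \in unitmx -> in_span (fun k => M *m Psi k) v <-> in_span Psi (invmx M *m v).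
Proof.
move=> uM; split=> -[c Hc]; exists c.
  by rewrite Hc mulmx_sumr; apply: eq_bigr => k _; rewrite -scalemxAr mulKmx.
rewrite -(mulKVmx uM v) Hc mulmx_sumr.
by apply: eq_bigr => k _; rewrite -scalemxAr.
Qed.

Lemma lin_indep_mulmx n M (Psi : 'I_n -> 'cV[R[i]]_D) :
  M \in unitmx -> lin_indep Psi -> lin_indep (fun k => M *m Psi k).
Proof.
move=> uM indep c Hc; apply: indep.
apply: (can_inj (mulKmx uM)); rewrite mulmx0 -[RHS]Hc mulmx_sumr.
by apply: eq_bigr => k _; rewrite scalemxAr.
Qed.

End PositiveForms.

Theorem theorem1 (R : realType) (N : nat) (d : 'I_N -> nat)
    (L : 'I_N -> 'M[R[i]]_(hdim d))
    (HL : forall j : 'I_N, (j.+1 < N)%N -> acts_on (bond j) (L j))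
    (n : nat) (Psi : 'I_n -> 'cV[R[i]]_(hdim d))
    (Hn : (0 < n)%N)
    (Hindep : lin_indep Psi)
    (HG : forall v, (forall j : 'I_N, (j.+1 < N)%N -> L j *m v = 0) <-> in_span Psi v)
    (HGH : forall v, gs_manifold (\sum_(j < N | (j.+1 < N)%N) adj (L j) *m L j) v
                     <-> in_span Psi v)
    (Mloc : 'I_N -> 'M[R[i]]_(hdim d))
    (HMloc : forall j : 'I_N, acts_on [set j] (Mloc j))
    (HMinv : forall j : 'I_N, Mloc j \in unitmx)
    (Cop : 'I_N -> 'M[R[i]]_(hdim d))
    (HCloc : forall j : 'I_N, (j.+1 < N)%N -> acts_on (bond j) (Cop j))
    (HCpd : forall j : 'I_N, (j.+1 < N)%N -> pos_def (Cop j)) :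
  let M := \big[mulmx/1%:M]_(j < N) Mloc j in
  let Lt := fun j : 'I_N => M *m L j *m invmx M in
  let Ht := \sum_(j < N | (j.+1 < N)%N) adj (Lt j) *m Cop j *m Lt j in
  let MPsi := fun k : 'I_n => M *m Psi k in
  (forall v, gs_manifold Ht v <-> in_span MPsi v) /\
  (forall v, (forall j : 'I_N, (j.+1 < N)%N -> Lt j *m v = 0) <-> in_span MPsi v) /\
  lin_indep MPsi.
Proof.
move=> M Lt Ht MPsi.
have uM : M \in unitmx by rewrite /M; apply: unitmx_big_mulmx.
have kerLt v : (forall j : 'I_N, (j.+1 < N)%N -> Lt j *m v = 0) <-> in_span MPsi v.
  rewrite /MPsi in_span_mulmx // -HG.
  by split=> H j Hj; apply/(conjmx_mulmx_eq0 _ _ _ uM)/H.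
split; last split=> //; last exact: lin_indep_mulmx.
by move=> v; rewrite /gs_manifold -kerLt; apply: sum_adj_pos_def_ker.
Qed.
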